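(* Let $AP=\{p\}$. For $n\ge1$ let $\mathcal{T}_n$ be the Kripke tree over $AP$ consisting of an infinite main path $\pi(0)\pi(1)\cdots$ from the root, all labelled $\emptyset$, such that $\pi(n+1)$ has exactly one child (namely $\pi(n+2)$), and every $\pi(i)$ with $i\ne n+1$ has exactly two children, $\pi(i+1)$ and a node $w_i$, where the subtree rooted at $w_i$ is a single infinite path whose labels are $\{p\},\emptyset,\emptyset,\emptyset,\dots$. Then for every $n\ge1$ and every CCTL$^*$ state formula $\varphi$ over $AP$ with $|\varphi|\le n$, we have $\mathcal{T}_n\models\varphi$ if and only if $\mathcal{T}_{n+1}\models\varphi$.
   Context: A Kripke tree over $AP$ is a non-blocking tree (nonempty prefix-closed set of words over some set of directions, every node having a child) with a labelling of nodes by subsets of $AP$; an infinite path starting at $w$ is a sequence of nodes $\pi(0)=w,\pi(1),\dots$ with each $\pi(k+1)$ a child of $\pi(k)$. CCTL$^*$: state formulas $\varphi::=\top\mid p\mid\neg\varphi\mid\varphi\wedge\varphi\mid\mathsf{E}\psi\mid\mathsf{D}^k\varphi$ ($k\ge1$), path formulas $\psi::=\varphi\mid\neg\psi\mid\psi\wedge\psi\mid\mathsf{X}\psi\mid\psi\mathsf{U}\psi$. $(\mathcal{T},w)\models p$ iff $p\in\mathit{Lab}(w)$; $(\mathcal{T},w)\models\mathsf{E}\psi$ iff $(\mathcal{T},\pi,0)\models\psi$ for some infinite path $\pi$ starting at $w$; $(\mathcal{T},w)\models\mathsf{D}^k\varphi$ iff at least $k$ distinct children of $w$ satisfy $\varphi$;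 $(\mathcal{T},\pi,i)\models\varphi$ iff $(\mathcal{T},\pi(i))\models\varphi$; $(\mathcal{T},\pi,i)\models\mathsf{X}\psi$ iff $(\mathcal{T},\pi,i+1)\models\psi$; $(\mathcal{T},\pi,i)\models\psi_1\mathsf{U}\psi_2$ iff for some $j\ge i$, $(\mathcal{T},\pi,j)\models\psi_2$ and $(\mathcal{T},\pi,k)\models\psi_1$ for $i\le k<j$; Booleans standard. $\mathcal{T}\models\varphi$ means $(\mathcal{T},\varepsilon)\models\varphi$. $|\varphi|$ denotes the length (size) of the formula $\varphi$, i.e. its number of symbols, so that proper subformulas are strictly shorter. *)

From Stdlib Require Import List Arith Lia.
Import ListNotations.
Set Implicit Arguments.

Record KTree (AP : Type) := {
  Dir  : Type;
  node : list Dir -> Prop;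
  lab  : list Dir -> AP -> Prop
}.
Arguments Dir {AP}.
Arguments node {AP}.
Arguments lab {AP}.

Definition is_kripke_tree {AP} (T : KTree AP) : Prop :=
  node T [] /\
  (forall u v, node T (u ++ v) -> node T u) /\
  (forall w, node T w -> exists d, node T (w ++ [d])).

Inductive sform (AP : Type) : Type :=
  | STrue : sform AP
  | SAtom : AP -> sform AP
  | SNot  : sform AP -> sform AP
  | SAnd  : sform AP -> sform AP -> sform AP
  | SE    : pform AP -> sform AP
  | SD    : nat -> sform AP -> sform AP
with pform (AP : Type) : Type :=
  | PState : sform AP -> pform AP
  | PNot   : pform AP -> pform AP
  | PAnd   : pform AP -> pform AP -> pform AP
  | PX     : pform AP -> pform AP
  | PU     : pform AP -> pform AP -> pform AP.
Arguments STrue {AP}.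

Fixpoint wf_s {AP} (f : sform AP) : Prop :=
  match f with
  | STrue | SAtom _ => True
  | SNot g => wf_s g
  | SAnd g h => wf_s g /\ wf_s h
  | SE p => wf_p p
  | SD k g => 1 <= k /\ wf_s g
  end
with wf_p {AP} (p : pform AP) : Prop :=
  match p with
  | PState f => wf_s f
  | PNot q => wf_p q
  | PAnd q r => wf_p q /\ wf_p r
  | PX q => wf_p q
  | PU q r => wf_p q /\ wf_p r
  end.

(* Length (number of symbols) of a formula; D^k is one symbol,
   the embedding of state formulas into path formulas is not a symbol. *)
Fixpoint size_s {AP} (f : sform AP) : nat :=
  match f with
  | STrue | SAtom _ => 1
  | SNot g => S (size_s g)
  | SAnd g h => S (size_s g + size_s h)
  | SE p => S (size_p p)
  | SD _ g => S (size_s g)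
  end
with size_p {AP} (p : pform AP) : nat :=
  match p with
  | PState f => size_s f
  | PNot q => S (size_p q)
  | PAnd q r => S (size_p q + size_p r)
  | PX q => S (size_p q)
  | PU q r => S (size_p q + size_p r)
  end.

Definition is_path {AP} (T : KTree AP) (w : list (Dir T)) (pi : nat -> list (Dir T)) : Prop :=
  pi 0 = w /\ forall k, exists d, pi (S k) = pi k ++ [d] /\ node T (pi (S k)).

Fixpoint sat_s {AP} (T : KTree AP) (w : list (Dir T)) (f : sform AP) : Prop :=
  match f with
  | STrue => True
  | SAtom a => lab T w a
  | SNot g => ~ sat_s T w g
  | SAnd g h => sat_s T w g /\ sat_s T w h
  | SE p => exists pi, is_path T w pi /\ sat_p T pi 0 p
  | SD k g => exists ds : list (Dir T),
      NoDup ds /\ length ds = k /\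
      forall d, In d ds -> node T (w ++ [d]) /\ sat_s T (w ++ [d]) g
  end
with sat_p {AP} (T : KTree AP) (pi : nat -> list (Dir T)) (i : nat) (p : pform AP) : Prop :=
  match p with
  | PState f => sat_s T (pi i) f
  | PNot q => ~ sat_p T pi i q
  | PAnd q r => sat_p T pi i q /\ sat_p T pi i r
  | PX q => sat_p T pi (S i) q
  | PU q r => exists j, i <= j /\ sat_p T pi j r /\
                forall k, i <= k < j -> sat_p T pi k q
  end.

Definition models {AP} (T : KTree AP) (f : sform AP) : Prop := sat_s T [] f.

(* The trees T_n over AP = {p} (AP := unit, p := tt), directions bool.
   Main path pi(i) = repeat false i.  For i <> n+1, pi(i) has the extra
   child w_i = pi(i) ++ [true], whose subtree is the single path
   w_i ++ repeat false k. *)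
Definition Tn_node (n : nat) (w : list bool) : Prop :=
  (exists i, w = repeat false i) \/
  (exists i k, i <> S n /\ w = repeat false i ++ true :: repeat false k).

Definition Tn_lab (n : nat) (w : list bool) (_ : unit) : Prop :=
  exists i, i <> S n /\ w = repeat false i ++ [true].

Definition Tn (n : nat) : KTree unit :=
  {| Dir := bool; node := Tn_node n; lab := Tn_lab n |}.

From Stdlib Require Import List Arith Lia Wf_nat Classical.
Import ListNotations.

(* Every node of [T_n] has one of four kinds (see [kind]), and its kind
   determines its subtree.  Formulas of size at most [s] cannot
   distinguish main nodes that are at least [s - 1] steps above the defect.
   Atoms and D^k only look one step ahead.  For E ψ, a path from one node is
   matched by a path from the other that differs only in the length of its
   initial stretch of such high main nodes; the state subformulas of ψ cannot
   see the difference, and the path connectives can only count steps through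
   nested X, so lengths that both exceed the X-depth of ψ look the same.  At
   the roots of [T_n] and [T_(n+1)] the defect is [n + 1] and [n + 2] steps
   away. *)

(** * Path formulas cannot see the length of long high prefixes *)

Fixpoint xdepth {AP} (psi : pform AP) : nat :=
  match psi with
  | PState _ => 0
  | PNot q => xdepth q
  | PAnd q r | PU q r => Nat.max (xdepth q) (xdepth r)
  | PX q => S (xdepth q)
  end.

Fixpoint max_state_size {AP} (psi : pform AP) : nat :=
  match psi with
  | PState f => size_s f
  | PNot q | PX q => max_state_size q
  | PAnd q r | PU q r => Nat.max (max_state_size q) (max_state_size r)
  end.

Lemma size_s_pos {AP} (f : sform AP) : 1 <= size_s f.
Proof. destruct f; simpl; lia. Qed.

Lemma max_state_size_pos {AP} (psi : pform AP) : 1 <= max_state_size psi.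
Proof. induction psi; simpl; try lia. apply size_s_pos. Qed.

Lemma xdepth_max_state_size_le {AP} (psi : pform AP) :
  max_state_size psi + xdepth psi <= size_p psi.
Proof. induction psi; simpl; lia. Qed.

Section Alignment.

Context {K : Type} (high : K -> Prop).

(* A path formula of X-depth at most [xi] cannot tell apart high prefixes that
   are both longer than [xi]. *)
Definition aligned (xi : nat) (c c' : nat -> K) (i i' : nat) : Prop :=
  exists p p',
    (forall j, j < p -> high (c (i + j))) /\
    (forall j, j < p' -> high (c' (i' + j))) /\
    (forall k, c (i + p + k) = c' (i' + p' + k)) /\
    (p = p' \/ xi < p /\ xi < p').

Lemma aligned_sym xi c c' i i' : aligned xi c c' i i' -> aligned xi c' c i' i.
Proof.
  intros (p & p' & Hp & Hp' & Htail & Hlen).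
  exists p', p. split; [exact Hp' | split; [exact Hp | split; [|lia]]].
  intros k. symmetry. apply Htail.
Qed.

Lemma aligned_ext xi c1 c2 c1' c2' i i' :
  (forall k, c1 k = c2 k) -> (forall k, c1' k = c2' k) ->
  aligned xi c1 c1' i i' -> aligned xi c2 c2' i i'.
Proof.
  intros E E' (p & p' & Hp & Hp' & Htail & Hlen).
  exists p, p'. split; [|split; [|split]]; [| | | exact Hlen].
  - intros j Hj. rewrite <- E. auto.
  - intros j Hj. rewrite <- E'. auto.
  - intros k. rewrite <- E, <- E'. auto.
Qed.

Lemma aligned_mono xi1 xi2 c c' i i' :
  xi1 <= xi2 -> aligned xi2 c c' i i' -> aligned xi1 c c' i i'.
Proof.
  intros Hxi (p & p' & Hp & Hp' & Htail & Hlen).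
  exists p, p'. split; [exact Hp | split; [exact Hp' | split; [exact Htail | lia]]].
Qed.

Lemma aligned_here xi c c' i i' :
  aligned xi c c' i i' -> c i = c' i' \/ high (c i) /\ high (c' i').
Proof.
  intros ([|p] & [|p'] & Hp & Hp' & Htail & Hlen); try lia.
  - left. specialize (Htail 0). rewrite !Nat.add_0_r in Htail. exact Htail.
  - right. specialize (Hp 0). specialize (Hp' 0). rewrite Nat.add_0_r in Hp, Hp'.
    split; [apply Hp | apply Hp']; lia.
Qed.

Definition offsets_aligned xi p p' d d' : Prop :=
  (d <= p /\ d' <= p' /\ (p - d = p' - d' \/ xi < p - d /\ xi < p' - d')) \/
  (p <= d /\ p' <= d' /\ d - p = d' - p').

Lemma aligned_shift xi c c' i i' p p' d d' :
  (forall j, j < p -> high (c (i + j))) ->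
  (forall j, j < p' -> high (c' (i' + j))) ->
  (forall k, c (i + p + k) = c' (i' + p' + k)) ->
  offsets_aligned xi p p' d d' -> aligned xi c c' (i + d) (i' + d').
Proof.
  intros Hp Hp' Htail [(Hd & Hd' & Hlen) | (Hd & Hd' & Heq)].
  - exists (p - d), (p' - d'). split; [|split; [|split]]; [| | |exact Hlen].
    + intros j Hj. replace (i + d + j) with (i + (d + j)) by lia. apply Hp. lia.
    + intros j Hj. replace (i' + d' + j) with (i' + (d' + j)) by lia. apply Hp'. lia.
    + intros k. replace (i + d + (p - d) + k) with (i + p + k) by lia.
      replace (i' + d' + (p' - d') + k) with (i' + p' + k) by lia. apply Htail.
  - exists 0, 0. split; [|split; [|split]]; [intros; lia | intros; lia | | lia].
    intros k. replace (i + d + 0 + k) with (i + p + (d - p + k)) by lia.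
    replace (i' + d' + 0 + k) with (i' + p' + (d - p + k)) by lia. apply Htail.
Qed.

Lemma aligned_next xi c c' i i' :
  aligned (S xi) c c' i i' -> aligned xi c c' (S i) (S i').
Proof.
  intros (p & p' & Hp & Hp' & Htail & Hlen).
  replace (S i) with (i + 1) by lia. replace (S i') with (i' + 1) by lia.
  apply (aligned_shift xi c c' i i' p p'); auto.
  unfold offsets_aligned; lia.
Qed.

Lemma offsets_until xi p p' d : p = p' \/ xi < p /\ xi < p' ->
  exists d', offsets_aligned xi p p' d d' /\
    forall k', k' < d' -> exists k, k < d /\ offsets_aligned xi p p' k k'.
Proof.
  unfold offsets_aligned. intros [<- | [Hp Hp']].
  - exists d. split; [lia|]. intros k' Hk'. exists k'. lia.
  - destruct (le_lt_dec p d) as [Hpd | Hdp].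
    + exists (p' + (d - p)). split; [lia|]. intros k' Hk'.
      destruct (le_lt_dec p' k'); [exists (p + (k' - p')); lia|].
      destruct (le_lt_dec (p' - k') p); [exists (p - (p' - k')) | exists 0]; lia.
    + destruct (Nat.eq_dec d 0) as [-> | Hd]; [exists 0; split; [lia | intros; lia]|].
      destruct (le_lt_dec (p - d) p'); [| exists 0; split; [lia | intros; lia]].
      exists (p' - (p - d)). split; [lia|]. intros k' Hk'.
      destruct (le_lt_dec (p' - k') p); [exists (p - (p' - k')) | exists 0]; lia.
Qed.

Lemma aligned_until xi c c' i i' : aligned xi c c' i i' ->
  forall j, i <= j -> exists j', i' <= j' /\ aligned xi c c' j j' /\
    forall k', i' <= k' < j' -> exists k, i <= k < j /\ aligned xi c c' k k'.
Proof.
  intros (p & p' & Hp & Hp' & Htail & Hlen) j Hij.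
  destruct (offsets_until xi p p' (j - i) Hlen) as (d' & Hd' & Hback).
  exists (i' + d'). split; [lia | split].
  - assert (Hal := aligned_shift _ _ _ _ _ _ _ _ _ Hp Hp' Htail Hd').
    replace (i + (j - i)) with j in Hal by lia. exact Hal.
  - intros k' Hk'. destruct (Hback (k' - i')) as (k & Hk & Hoff); [lia|].
    exists (i + k). split; [lia|].
    assert (Hal := aligned_shift _ _ _ _ _ _ _ _ _ Hp Hp' Htail Hoff).
    replace (i' + (k' - i')) with k' in Hal by lia. exact Hal.
Qed.

End Alignment.

Section PathFormulas.

Context {AP : Type} (T T' : KTree AP) {K : Type} (high : K -> Prop).
Variables (pi : nat -> list (Dir T)) (pi' : nat -> list (Dir T')) (c c' : nat -> K) (H : nat).

Hypothesis state_agree : forall f i i', size_s f <= H ->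
  c i = c' i' \/ high (c i) /\ high (c' i') ->
  (sat_s T (pi i) f <-> sat_s T' (pi' i') f).

Lemma sat_p_aligned psi : max_state_size psi <= H ->
  forall i i', aligned high (xdepth psi) c c' i i' ->
  (sat_p T pi i psi <-> sat_p T' pi' i' psi).
Proof.
  induction psi as [f | q IHq | q IHq r IHr | q IHq | q IHq r IHr];
    simpl; intros Hsize i i' Hal.
  - exact (state_agree f i i' Hsize (aligned_here _ _ _ _ _ _ Hal)).
  - rewrite (IHq Hsize i i' Hal). tauto.
  - rewrite (IHq ltac:(lia) i i'), (IHr ltac:(lia) i i'); [tauto | |];
      eapply aligned_mono; try exact Hal; lia.
  - exact (IHq Hsize _ _ (aligned_next _ _ _ _ _ _ Hal)).
  - assert (Hq : forall k k', aligned high (Nat.max (xdepth q) (xdepth r)) c c' k k' ->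
              (sat_p T pi k q <-> sat_p T' pi' k' q))
      by (intros k k' Hk; apply IHq; [lia | eapply aligned_mono; [|exact Hk]; lia]).
    assert (Hr : forall k k', aligned high (Nat.max (xdepth q) (xdepth r)) c c' k k' ->
              (sat_p T pi k r <-> sat_p T' pi' k' r))
      by (intros k k' Hk; apply IHr; [lia | eapply aligned_mono; [|exact Hk]; lia]).
    split; intros (j & Hij & Hrj & Hqj).
    + destruct (aligned_until _ _ _ _ _ _ Hal j Hij) as (j' & Hij' & Hal' & Hback).
      exists j'. split; [exact Hij' | split; [exact (proj1 (Hr j j' Hal') Hrj) |]].
      intros k' Hk'. destruct (Hback k' Hk') as (k & Hk & Halk).
      exact (proj1 (Hq k k' Halk) (Hqj k Hk)).
    + destruct (aligned_until _ _ _ _ _ _ (aligned_sym _ _ _ _ _ _ Hal) j Hij)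
        as (j' & Hij' & Hal' & Hback).
      apply aligned_sym in Hal'.
      exists j'. split; [exact Hij' | split; [exact (proj2 (Hr j' j Hal') Hrj) |]].
      intros k' Hk'. destruct (Hback k' Hk') as (k & Hk & Halk).
      apply aligned_sym in Halk.
      exact (proj2 (Hq k' k Halk) (Hqj k Hk)).
Qed.

End PathFormulas.

(** * Kinds of nodes and runs *)

(* [Main z]: on the main path, [z] steps above the defect π(n+1), the main node
   without an offshoot; [Beyond]: on the main path below the defect; [Off]: the
   labelled root w_i of an offshoot; [OffTail]: deeper in an offshoot. *)
Inductive kind := Main (z : nat) | Beyond | Off | OffTail.

Definition next (c : kind) (d : bool) : option kind :=
  match c, d with
  | Main (S z), false => Some (Main z)
  | Main 0, false => Some Beyond
  | Main (S _), true | Beyond, true => Some Off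
  | Main 0, true | Off, true | OffTail, true => None
  | Beyond, false => Some Beyond
  | Off, false | OffTail, false => Some OffTail
  end.

Definition high (H : nat) (c : kind) : Prop :=
  match c with Main z => H <= S z | _ => False end.

Definition similar (s : nat) (c c' : kind) : Prop := c = c' \/ high s c /\ high s c'.

Lemma similar_sym s c c' : similar s c c' -> similar s c' c.
Proof. unfold similar. intuition. Qed.

Lemma similar_mono s1 s2 c c' : s1 <= s2 -> similar s2 c c' -> similar s1 c c'.
Proof.
  intros Hs [Heq | [Hc Hc']]; [left; exact Heq | right].
  destruct c, c'; simpl in *; tauto || lia.
Qed.

Lemma next_similar s c c' d c1 : 1 <= s -> similar (S s) c c' -> next c d = Some c1 ->
  exists c1', next c' d = Some c1' /\ similar s c1 c1'.
Proof.
  intros Hs [<- | [Hc Hc']] Hnext; [exists c1; split; [exact Hnext | left; reflexivity]|].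
  destruct c as [[|z]| | |], c' as [[|z']| | |]; simpl in Hc, Hc'; try lia.
  destruct d; injection Hnext as <-; eexists; (split; [reflexivity|]).
  - left; reflexivity.
  - right; simpl; lia.
Qed.

Definition mainc (x m : nat) : kind := if m <=? x then Main (x - m) else Beyond.

Lemma next_mainc_false x m : next (mainc x m) false = Some (mainc x (S m)).
Proof.
  unfold mainc. destruct (Nat.leb_spec m x), (Nat.leb_spec (S m) x); try lia.
  - replace (x - m) with (S (x - S m)) by lia. reflexivity.
  - replace (x - m) with 0 by lia. reflexivity.
  - reflexivity.
Qed.

Lemma next_mainc_true x m : next (mainc x m) true = if m =? x then None else Some Off.
Proof.
  unfold mainc. destruct (Nat.leb_spec m x), (Nat.eqb_spec m x); try lia.
  - subst. rewrite Nat.sub_diag. reflexivity.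
  - replace (x - m) with (S (x - S m)) by lia. reflexivity.
  - reflexivity.
Qed.

(* An invalid step leaves the kind unchanged: only valid runs are ever used. *)
Fixpoint run (c : kind) (d : nat -> bool) (k : nat) : kind :=
  match k with
  | 0 => c
  | S k => let c' := run c d k in match next c' (d k) with Some c'' => c'' | None => c' end
  end.

Definition valid (c : kind) (d : nat -> bool) : Prop := forall k, next (run c d k) (d k) <> None.

Lemma run_S c d k c' : next (run c d k) (d k) = Some c' -> run c d (S k) = c'.
Proof. simpl. intros ->. reflexivity. Qed.

Lemma run_ext c d d' k : (forall j, j < k -> d j = d' j) -> run c d k = run c d' k.
Proof.
  induction k as [|k IH]; intros Hd; [reflexivity|].
  simpl. rewrite IH by (intros; apply Hd; lia). rewrite Hd by lia. reflexivity.
Qed.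

Definition exit_dirs (e : option nat) (j : nat) : bool :=
  match e with Some e => j =? e | None => false end.

Definition main_run (x : nat) (e : option nat) (j : nat) : kind :=
  match e with
  | Some e => if j <=? e then mainc x j else if j =? S e then Off else OffTail
  | None => mainc x j
  end.

Ltac decide_nat_tests :=
  repeat match goal with
  | |- context [?a <=? ?b] => destruct (Nat.leb_spec a b)
  | |- context [?a =? ?b] => destruct (Nat.eqb_spec a b)
  end.

Lemma next_main_run x e j : e <> Some x ->
  next (main_run x e j) (exit_dirs e j) = Some (main_run x e (S j)).
Proof.
  intros He. unfold main_run, exit_dirs. destruct e as [e|]; [|apply next_mainc_false].
  destruct (lt_eq_lt_dec j e) as [[Hj | ->] | Hj].
  - decide_nat_tests; try lia. apply next_mainc_false.
  - rewrite Nat.leb_refl, Nat.eqb_refl, next_mainc_true.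
    decide_nat_tests; congruence || lia.
  - decide_nat_tests; reflexivity || lia.
Qed.

Lemma run_exit_dirs x e : e <> Some x ->
  valid (Main x) (exit_dirs e) /\ forall k, run (Main x) (exit_dirs e) k = main_run x e k.
Proof.
  intros He.
  assert (Hrun : forall k, run (Main x) (exit_dirs e) k = main_run x e k).
  { induction k as [|k IH].
    - destruct e; simpl; unfold mainc; decide_nat_tests; f_equal; lia.
    - apply run_S. rewrite IH. apply next_main_run, He. }
  split; [|exact Hrun].
  intros k. rewrite Hrun, next_main_run by exact He. discriminate.
Qed.

(* A run from a main node can leave the main path only once, into an offshoot
   which it must then follow to the end. *)
Lemma valid_main_dirs x d : valid (Main x) d ->
  exists e, e <> Some x /\ forall j, d j = exit_dirs e j.
Proof.
  intros Hd.
  destruct (classic (exists j, d j = true)) as [Htrue | Hnone].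
  2: { exists None. split; [discriminate|]. intros j. simpl.
       destruct (d j) eqn:E; [exfalso; eauto | reflexivity]. }
  destruct (dec_inh_nat_subset_has_unique_least_element (fun j => d j = true))
    as (e & [He Hmin] & _); [intros j; destruct (d j); auto | exact Htrue |].
  assert (Hbefore : forall j, j < e -> d j = false).
  { intros j Hj. destruct (d j) eqn:E; [specialize (Hmin j E); lia | reflexivity]. }
  assert (Hex : e <> x).
  { intros ->. apply (Hd x).
    rewrite (run_ext _ _ (exit_dirs None)) by (intros j Hj; apply Hbefore, Hj).
    rewrite (proj2 (run_exit_dirs x None ltac:(discriminate))), He.
    unfold main_run. rewrite next_mainc_true, Nat.eqb_refl. reflexivity. }
  exists (Some e). split; [congruence|].
  induction j as [j IH] using (well_founded_induction lt_wf). simpl.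
  destruct (lt_eq_lt_dec j e) as [[Hj | ->] | Hj].
  - rewrite Hbefore by exact Hj. symmetry. apply Nat.eqb_neq. lia.
  - rewrite He, Nat.eqb_refl. reflexivity.
  - destruct (d j) eqn:E; [exfalso | symmetry; apply Nat.eqb_neq; lia].
    apply (Hd j). rewrite E, (run_ext _ _ (exit_dirs (Some e))) by (intros; apply IH; lia).
    rewrite (proj2 (run_exit_dirs x (Some e) ltac:(congruence))). simpl.
    decide_nat_tests; reflexivity || lia.
Qed.

Ltac kind_arith :=
  unfold main_run, mainc; decide_nat_tests; simpl; try reflexivity; try (f_equal; lia); lia.

(* Both runs descend the main path through their high prefix (of length
   [x + 2 - H] and [x' + 2 - H]); a run leaving it earlier is copied, with its
   exit time capped so that the copy stays high and avoids the defect. *)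
Lemma main_runs_aligned H xi x x' e : 1 <= H -> H + xi <= x -> H + xi <= x' ->
  e <> Some x ->
  exists e', e' <> Some x' /\ aligned (high H) xi (main_run x e) (main_run x' e') 0 0.
Proof.
  intros H1 Hx Hx' He.
  destruct (classic (exists e0, e = Some e0 /\ e0 < x + 2 - H))
    as [(e0 & -> & He0) | Hlate].
  - set (e0' := Nat.min e0 (Nat.min x' (x' + 2 - H) - 1)).
    exists (Some e0'). split; [intros [=]; lia|].
    exists (S e0), (S e0'). split; [|split; [|split]].
    + intros j Hj. kind_arith.
    + intros j Hj. kind_arith.
    + intros k. kind_arith.
    + lia.
  - assert (Hlate' : forall e0, e = Some e0 -> x + 2 - H <= e0).
    { intros e0 ->. destruct (le_lt_dec (x + 2 - H) e0); [lia | exfalso; eauto]. }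
    exists (option_map (fun e0 => e0 - (x + 2 - H) + (x' + 2 - H)) e).
    split.
    { destruct e as [e0|]; [|discriminate].
      assert (e0 <> x) by congruence. specialize (Hlate' e0 eq_refl). intros [=]. lia. }
    exists (x + 2 - H), (x' + 2 - H).
    split; [|split; [|split]]; [| | | lia]; destruct e as [e0|]; simpl;
      try specialize (Hlate' e0 eq_refl); try (intros j Hj); try (intros k); kind_arith.
Qed.

Lemma aligned_run_exists H xi c c' d : 1 <= H -> similar (S (H + xi)) c c' -> valid c d ->
  exists d', valid c' d' /\ aligned (high H) xi (run c d) (run c' d') 0 0.
Proof.
  intros H1 [<- | [Hc Hc']] Hd.
  - exists d. split; [exact Hd|]. exists 0, 0. repeat split; intros; lia || reflexivity.
  - destruct c as [x| | |], c' as [x'| | |]; simpl in Hc, Hc'; try contradiction.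
    destruct (valid_main_dirs x d Hd) as (e & He & Hde).
    destruct (main_runs_aligned H xi x x' e H1 ltac:(lia) ltac:(lia) He) as (e' & He' & Hal).
    destruct (run_exit_dirs x e He) as [_ Hrun].
    destruct (run_exit_dirs x' e' He') as [Hv' Hrun'].
    exists (exit_dirs e'). split; [exact Hv'|].
    assert (Hrun_d : forall k, main_run x e k = run (Main x) d k).
    { intros k. rewrite <- Hrun. apply run_ext. intros j _. symmetry. apply Hde. }
    exact (aligned_ext _ _ _ _ _ _ _ _ Hrun_d (fun k => eq_sym (Hrun' k)) Hal).
Qed.

(** * The trees [T_n] *)

Lemma repeat_snoc {A} (a : A) n : repeat a n ++ [a] = repeat a (S n).
Proof. symmetry. apply repeat_cons. Qed.

Definition off_kind (k : nat) : kind := match k with 0 => Off | S _ => OffTail end.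

Definition kind_of (n : nat) (w : list bool) : kind :=
  if existsb (fun b => b) w then (if last w false then Off else OffTail)
  else mainc (S n) (length w).

Lemma kind_of_main n i : kind_of n (repeat false i) = mainc (S n) i.
Proof.
  unfold kind_of. rewrite repeat_length.
  replace (existsb _ (repeat false i)) with false by (induction i; auto).
  reflexivity.
Qed.

Lemma kind_of_off n i k : kind_of n (repeat false i ++ true :: repeat false k) = off_kind k.
Proof.
  unfold kind_of. rewrite existsb_app. simpl. rewrite Bool.orb_true_r.
  destruct k as [|k]; [rewrite last_last; reflexivity|].
  rewrite <- repeat_snoc, app_comm_cons, app_assoc, last_last. reflexivity.
Qed.

Lemma main_neq_off j i l : repeat false j <> repeat false i ++ true :: l.
Proof. intros E. destruct (repeat_eq_elt _ _ _ _ _ E) as [[=] _]. Qed.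

Lemma off_inj i i' l l' : repeat false i ++ true :: l = repeat false i' ++ true :: l' ->
  i = i' /\ l = l'.
Proof.
  revert i'. induction i as [|i IH]; intros [|i'] E; simpl in E; try discriminate.
  - injection E as E. auto.
  - injection E as E. destruct (IH i' E). auto.
Qed.

Lemma Tn_node_off n i l : Tn_node n (repeat false i ++ true :: l) <->
  i <> S n /\ exists k, l = repeat false k.
Proof.
  split.
  - intros [[j E] | (i' & k & Hi' & E)]; [exfalso; exact (main_neq_off _ _ _ (eq_sym E))|].
    destruct (off_inj _ _ _ _ E) as [-> ->]. eauto.
  - intros [Hi [k ->]]. right. eauto.
Qed.

Lemma Tn_child n w d : Tn_node n w ->
  (Tn_node n (w ++ [d]) /\ next (kind_of n w) d = Some (kind_of n (w ++ [d]))) \/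
  (~ Tn_node n (w ++ [d]) /\ next (kind_of n w) d = None).
Proof.
  intros [[i ->] | (i & k & Hi & ->)]; rewrite ?kind_of_main, ?kind_of_off; destruct d.
  - change [true] with (true :: repeat false 0).
    rewrite next_mainc_true, Tn_node_off, kind_of_off.
    destruct (Nat.eqb_spec i (S n)) as [Hdefect | Hndefect]; [right | left]; split; auto.
    + intros [Hi _]. contradiction.
    + split; [exact Hndefect | exists 0; reflexivity].
  - left. rewrite repeat_snoc, kind_of_main, next_mainc_false.
    split; [left; eauto | reflexivity].
  - right. rewrite <- app_assoc, <- app_comm_cons, Tn_node_off. split; [|destruct k; reflexivity].
    intros [_ [k' E]]. exact (main_neq_off k' k [] (eq_sym E)).
  - left. rewrite <- app_assoc, <- app_comm_cons, repeat_snoc, kind_of_off.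
    split; [right; eauto | destruct k; reflexivity].
Qed.

Lemma Tn_lab_kind n w : Tn_node n w -> (Tn_lab n w tt <-> kind_of n w = Off).
Proof.
  intros [[i ->] | (i & k & Hi & ->)]; rewrite ?kind_of_main, ?kind_of_off.
  - split.
    + intros (i' & _ & E). exfalso. exact (main_neq_off _ _ _ E).
    + unfold mainc. destruct (i <=? S n); discriminate.
  - split.
    + intros (i' & _ & E). destruct (off_inj _ _ _ _ E) as [_ Hk].
      destruct k; [reflexivity | discriminate].
    + destruct k; [intros _; exists i; auto | discriminate].
Qed.

Lemma path_run a u (pi : nat -> list bool) : Tn_node a u -> is_path (Tn a) u pi ->
  let d := fun k => last (pi (S k)) false in
  valid (kind_of a u) d /\ forall k, Tn_node a (pi k) /\ kind_of a (pi k) = run (kind_of a u) d k.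
Proof.
  intros Hu [H0 Hstep] d.
  assert (Hchild : forall k, Tn_node a (pi k) ->
            next (kind_of a (pi k)) (d k) = Some (kind_of a (pi (S k)))).
  { intros k Hk. destruct (Hstep k) as (dk & E & Hnode). unfold d. rewrite E, last_last.
    rewrite E in Hnode. destruct (Tn_child a (pi k) dk Hk) as [[_ ->] | [Hnot _]];
      [reflexivity | contradiction]. }
  assert (Hrun : forall k, Tn_node a (pi k) /\ kind_of a (pi k) = run (kind_of a u) d k).
  { induction k as [|k [Hk Hkind]]; [rewrite H0; auto|].
    split; [destruct (Hstep k) as (dk & _ & Hnode); exact Hnode|].
    symmetry. apply run_S. rewrite <- Hkind. apply Hchild, Hk. }
  split; [|exact Hrun].
  intros k. destruct (Hrun k) as [Hk <-]. rewrite Hchild by exact Hk. discriminate.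
Qed.

Lemma run_path b (v : list bool) g : Tn_node b v -> valid (kind_of b v) g ->
  let pi := fun k => v ++ map g (seq 0 k) in
  is_path (Tn b) v pi /\ forall k, Tn_node b (pi k) /\ kind_of b (pi k) = run (kind_of b v) g k.
Proof.
  intros Hv Hg pi.
  assert (Hsnoc : forall k, pi (S k) = pi k ++ [g k]).
  { intros k. unfold pi. rewrite seq_S, map_app, app_assoc. reflexivity. }
  assert (Hrun : forall k, Tn_node b (pi k) /\ kind_of b (pi k) = run (kind_of b v) g k).
  { induction k as [|k [Hk Hkind]]; [unfold pi; simpl; rewrite app_nil_r; auto|].
    rewrite Hsnoc. destruct (Tn_child b (pi k) (g k) Hk) as [[Hnode Hnext] | [_ Hnone]].
    - split; [exact Hnode|]. symmetry. apply run_S. rewrite <- Hkind. exact Hnext.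
    - exfalso. apply (Hg k). rewrite <- Hkind. exact Hnone. }
  split; [|exact Hrun].
  split; [unfold pi; simpl; apply app_nil_r|].
  intros k. exists (g k). split; [apply Hsnoc | apply (Hrun (S k))].
Qed.

(** * Formulas cannot distinguish similar nodes *)

Definition invariant (f : sform unit) : Prop :=
  forall a b (u v : list bool), Tn_node a u -> Tn_node b v ->
  similar (size_s f) (kind_of a u) (kind_of b v) ->
  (sat_s (Tn a) u f <-> sat_s (Tn b) v f).

Lemma sat_D_similar k g : invariant g ->
  forall a b (u v : list bool), Tn_node a u -> Tn_node b v ->
  similar (S (size_s g)) (kind_of a u) (kind_of b v) ->
  sat_s (Tn a) u (SD k g) -> sat_s (Tn b) v (SD k g).
Proof.
  intros Hg a b u v Hu Hv Hsim (ds & Hnodup & Hlen & Hds).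
  exists ds. split; [exact Hnodup|]. split; [exact Hlen|].
  intros d Hd. destruct (Hds d Hd) as [Hud Hsat].
  destruct (Tn_child a u d Hu) as [[_ Hnext] | [Hnot _]]; [|contradiction].
  destruct (next_similar _ _ _ _ _ (size_s_pos g) Hsim Hnext) as (c' & Hnext' & Hsim').
  destruct (Tn_child b v d Hv) as [[Hvd Hnextv] | [_ Hnone]]; [|congruence].
  rewrite Hnextv in Hnext'. injection Hnext' as <-.
  split; [exact Hvd|]. exact (proj1 (Hg a b _ _ Hud Hvd Hsim') Hsat).
Qed.

Lemma sat_E_similar psi : (forall f, size_s f <= max_state_size psi -> invariant f) ->
  forall a b (u v : list bool), Tn_node a u -> Tn_node b v ->
  similar (S (size_p psi)) (kind_of a u) (kind_of b v) ->
  sat_s (Tn a) u (SE psi) -> sat_s (Tn b) v (SE psi).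
Proof.
  intros Hstate a b u v Hu Hv Hsim (pi & Hpi & Hsat).
  destruct (path_run a u pi Hu Hpi) as [Hd Hkinds].
  assert (Hsim_psi : similar (S (max_state_size psi + xdepth psi)) (kind_of a u) (kind_of b v))
    by (apply (similar_mono _ _ _ _ (le_n_S _ _ (xdepth_max_state_size_le psi)) Hsim)).
  destruct (aligned_run_exists _ _ _ _ _ (max_state_size_pos psi) Hsim_psi Hd) as (g & Hg & Hal).
  destruct (run_path b v g Hv Hg) as [Hpi' Hkinds'].
  eexists. split; [exact Hpi'|].
  refine (proj1 (sat_p_aligned _ _ _ _ _ _ _ _ _ psi (le_n _) 0 0 Hal) Hsat).
  intros f i i' Hf Hsim_i.
  destruct (Hkinds i) as [Hni Ei]. destruct (Hkinds' i') as [Hni' Ei'].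
  rewrite <- Ei, <- Ei' in Hsim_i.
  apply Hstate; [exact Hf | exact Hni | exact Hni' |].
  exact (similar_mono _ _ _ _ Hf Hsim_i).
Qed.

Lemma sat_s_similar s : forall f, size_s f <= s -> invariant f.
Proof.
  induction s as [|s IH]; intros f Hf; [pose proof (size_s_pos f); lia|].
  intros a b u v Hu Hv Hsim.
  destruct f as [| [] | g | g h | psi | k g]; simpl in Hf |- *.
  - tauto.
  - rewrite (Tn_lab_kind a u Hu), (Tn_lab_kind b v Hv).
    destruct Hsim as [-> | [Hc Hc']]; [tauto|].
    destruct (kind_of a u), (kind_of b v); simpl in Hc, Hc'; intuition discriminate.
  - rewrite (IH g ltac:(lia) a b u v Hu Hv); [tauto|].
    apply (similar_mono _ _ _ _ (Nat.le_succ_diag_r _) Hsim).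
  - rewrite (IH g ltac:(lia) a b u v Hu Hv), (IH h ltac:(lia) a b u v Hu Hv); [tauto | |];
      apply (similar_mono _ (size_s (SAnd g h))); simpl; auto; lia.
  - assert (Hstate : forall f, size_s f <= max_state_size psi -> invariant f)
      by (intros f Hf'; apply IH; pose proof (xdepth_max_state_size_le psi); lia).
    split; [apply (sat_E_similar psi Hstate a b u v Hu Hv Hsim)|].
    apply (sat_E_similar psi Hstate b a v u Hv Hu (similar_sym _ _ _ Hsim)).
  - assert (Hg : invariant g) by (apply IH; lia).
    split; [apply (sat_D_similar k g Hg a b u v Hu Hv Hsim)|].
    apply (sat_D_similar k g Hg b a v u Hv Hu (similar_sym _ _ _ Hsim)).
Qed.

Theorem lemma23 : forall (n : nat) (phi : sform unit),
  1 <= n -> wf_s phi -> size_s phi <= n ->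
  (models (Tn n) phi <-> models (Tn (S n)) phi).
Proof.
  intros n phi _ _ Hsize.
  apply (sat_s_similar n phi Hsize n (S n) [] []); [left; exists 0; reflexivity ..|].
  right. simpl. lia.
Qed.
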